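(* For every combinatorial auction with nonempty winner set $W$ and every bidder $i\in N$, the BLO outcome $\pi^{BLO}$ satisfies $\pi^{BLO}_i\ge \frac{1}{|W|}\pi^*_i$, where $\pi^*_i=\max\{\pi_i:\pi\in U\}$. The bound is tight: for every integer $k\ge1$ there is a combinatorial auction with $|W|=k$ and a bidder $i$ with $\pi^*_i>0$ and $\pi^{BLO}_i=\frac{1}{k}\pi^*_i$.
   Context: A combinatorial auction (CA) has a finite set of bidders $N=\{1,\dots,n\}$, a finite set of items $M$, and for each bidder $i$ a valuation $v_i:2^M\to\mathbb{R}_{\ge 0}$ with $v_i(\emptyset)=0$ (bids are assumed equal to true valuations). For $S\subseteq N$ let $w(S)=\max\{\sum_{i\in S}v_i(a_i): a_i\subseteq M,\ a_i\cap a_j=\emptyset\ (i\ne j)\}$ (with $w(\emptyset)=0$). Fix an allocation $(a^*_i)_{i\in N}$ attaining $w(N)$; the winner set is $W=\{i: a^*_i\neq\emptyset\}$. The core is $U=\{\pi\in\mathbb{R}^N:\ \pi_i\ge 0\ \forall i\in N,\ \sum_{i\in N\setminus S}\pi_i\le w(N)-w(S)\ \forall S\subseteq N\}$. For $x,y\in\mathbb{R}^n$, $x$ leximin-dominates $y$ if, writing $x_{(1)}\le\dots\le x_{(n)}$ and $y_{(1)}\le\dots\le y_{(n)}$ for the sorted entries, there is $0\le k\le n-1$ with $x_{(j)}=y_{(j)}$ for $j\le k$ and $x_{(k+1)}>y_{(k+1)}$. The BLO outcome $\pi^{BLO}$ is the (unique) $\pi\in U$ that is not leximin-dominated by any $\pi'\in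 U$. *)

From HB Require Import structures.
From mathcomp Require Import all_boot all_order all_algebra.
Set Implicit Arguments. Unset Strict Implicit. Unset Printing Implicit Defensive.
Import Order.TTheory GRing.Theory Num.Theory.
Local Open Scope ring_scope.

Definition valuation_ok (R : realFieldType) (n : nat) (M : finType)
    (v : 'I_n -> {set M} -> R) : Prop :=
  (forall i, v i set0 = 0) /\ (forall i A, 0 <= v i A).

Definition feasible (n : nat) (M : finType) (a : {ffun 'I_n -> {set M}}) : bool :=
  [forall i, forall j, (i != j) ==> [disjoint a i & a j]].

(* w(S) = max over feasible allocations of sum_{i in S} v_i(a_i);
   starting the max at 0 is harmless since valuations are nonnegative and the
   empty allocation is feasible (so w(set0) = 0). *)
Definition wS (R : realFieldType) (n : nat) (M : finType)
    (v : 'I_n -> {set M} -> R) (S : {set 'I_n}) : R :=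
  \big[Num.max/0]_(a : {ffun 'I_n -> {set M}} | feasible a)
     \sum_(i in S) v i (a i).

Definition optimal_alloc (R : realFieldType) (n : nat) (M : finType)
    (v : 'I_n -> {set M} -> R) (a : {ffun 'I_n -> {set M}}) : Prop :=
  feasible a /\ \sum_(i < n) v i (a i) = wS v [set: 'I_n].

Definition winners (n : nat) (M : finType) (a : {ffun 'I_n -> {set M}})
  : {set 'I_n} := [set i | a i != set0].

Definition in_core (R : realFieldType) (n : nat) (M : finType)
    (v : 'I_n -> {set M} -> R) (p : 'I_n -> R) : Prop :=
  (forall i, 0 <= p i) /\
  (forall S : {set 'I_n},
      \sum_(i in ~: S) p i <= wS v [set: 'I_n] - wS v S).

Definition sorted_vec (R : realFieldType) (n : nat) (x : 'I_n -> R) : seq R :=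
  sort <=%R [seq x i | i <- enum 'I_n].

Definition leximin_dom (R : realFieldType) (n : nat) (x y : 'I_n -> R) : Prop :=
  exists k : nat, (k < n)%N /\
    (forall j : nat, (j < k)%N -> nth 0 (sorted_vec x) j = nth 0 (sorted_vec y) j) /\
    nth 0 (sorted_vec y) k < nth 0 (sorted_vec x) k.

Definition is_BLO (R : realFieldType) (n : nat) (M : finType)
    (v : 'I_n -> {set M} -> R) (p : 'I_n -> R) : Prop :=
  in_core v p /\ ~ (exists q, in_core v q /\ leximin_dom q p).

Definition is_core_max (R : realFieldType) (n : nat) (M : finType)
    (v : 'I_n -> {set M} -> R) (i : 'I_n) (m : R) : Prop :=
  (exists p, in_core v p /\ p i = m) /\ (forall p, in_core v p -> p i <= m).

From HB Require Import structures.
From mathcomp Require Import all_boot all_order all_algebra.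
From mathcomp Require Import reals.
From mathcomp Require Import zify lra.
Set Implicit Arguments.
Unset Strict Implicit.
Unset Printing Implicit Defensive.
Import Order.TTheory GRing.Theory Num.Theory.
Local Open Scope ring_scope.

(* A BLO outcome [p] always has a tight coalition [S] (w(N) - w(S) is the sum
   of [p] over N \ S) such that [i] is outside [S] and nobody outside [S] pays
   more than [i]: otherwise shifting a small amount from the bidders paying
   more than [i] to [i] stays in the core and leximin-dominates [p].  Hence
   pi*_i <= w(N) - w(N \ {i}) <= w(N) - w(S) = sum_{N \ S} p <= |W| p_i, as
   losers pay nothing in the core.  For tightness, [k] single-minded bidders
   each value one item at 1 and one bidder values the whole package at k - 1:
   each single-minded bidder can pay up to 1 in the core, while the BLO
   outcome splits the surplus 1 equally among the [k] winners. *)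

Section SortedVec.
Variables (R : realFieldType) (n : nat).
Implicit Types (x y : 'I_n -> R) (s : seq R).

Lemma sort_cat_le s1 s2 : {in s1 & s2, forall a b, a <= b} ->
  sort <=%R (s1 ++ s2) = sort <=%R s1 ++ sort <=%R s2.
Proof.
move=> s12; apply: le_sorted_eq; first exact: sort_le_sorted.
- rewrite sorted_pairwise; last exact: le_trans.
  rewrite pairwise_cat -!sorted_pairwise ?sort_le_sorted ?andbT; try exact: le_trans.
  by apply/allrelP => a b; rewrite !mem_sort; apply: s12.
- by rewrite perm_sort; apply: perm_cat; rewrite perm_sym perm_sort.
Qed.

Lemma sorted_vec_split x c :
  sorted_vec x = sort <=%R [seq x j | j <- enum 'I_n & x j <= c]
              ++ sort <=%R [seq x j | j <- enum 'I_n & c < x j].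
Proof.
rewrite -sort_cat_le; last first.
  move=> _ _ /mapP[j + ->] /mapP[j' + ->]; rewrite !mem_filter.
  by move=> /andP[xj _] /andP[xj' _]; apply: le_trans xj (ltW xj').
have -> : [seq j <- enum 'I_n | c < x j] = [seq j <- enum 'I_n | ~~ (x j <= c)].
  by apply: eq_filter => j; rewrite ltNge.
by apply/perm_sort_leP; rewrite -map_cat perm_map // perm_sym perm_filterC.
Qed.

Lemma size_sorted_vec x : size (sorted_vec x) = n.
Proof. by rewrite size_sort size_map size_enum_ord. Qed.

Lemma sorted_vec_nth_le x m1 m2 : (m1 <= m2 < n)%N ->
  nth 0 (sorted_vec x) m1 <= nth 0 (sorted_vec x) m2.
Proof.
move=> /andP[m12 m2n]; apply: (sorted_leq_nth le_trans lexx) => //;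
  rewrite ?sort_le_sorted // inE size_sorted_vec //; exact: leq_ltn_trans m2n.
Qed.

Lemma sorted_vec_head_le x j : nth 0 (sorted_vec x) 0 <= x j.
Proof.
have xj : x j \in sorted_vec x by rewrite mem_sort map_f ?mem_enum.
rewrite -(nth_index 0 xj) sorted_vec_nth_le //=.
by have := index_mem (x j) (sorted_vec x); rewrite xj size_sorted_vec.
Qed.

Lemma sum_sorted_vec x : \sum_(m < n) nth 0 (sorted_vec x) m = \sum_j x j.
Proof.
have := big_nth 0 xpredT (fun a : R => a) (r := sorted_vec x) (op := +%R) (idx := 0).
rewrite size_sorted_vec big_mkord => <-.
by rewrite (perm_big _ (permEl (perm_sort _ _))) big_map big_enum.
Qed.

(* Both sorted vectors start with the entries of [x] at most [x i] other than
   [x i] itself; after them [x] continues with [x i], [y] with a larger one. *)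
Lemma leximin_dom_raise x y i :
  x i < y i ->
  (forall j, j != i -> x j <= x i -> y j = x j) ->
  (forall j, j != i -> x i < x j -> x i < y j) -> leximin_dom y x.
Proof.
set c := x i => yi ylow yhigh.
set Ly := [seq y j | j <- enum 'I_n & y j <= c].
set Ygt := [seq y j | j <- enum 'I_n & c < y j].
have Ly_low : Ly = [seq x j | j <- enum 'I_n & (j != i) && (x j <= c)].
  rewrite /Ly; have -> : [seq j <- enum 'I_n | y j <= c] =
            [seq j <- enum 'I_n | (j != i) && (x j <= c)].
    apply: eq_filter => j; have [->|ji] /= := eqVneq j i; first by rewrite leNgt yi.
    have [xj|xj] := leP (x j) c; first by rewrite ylow.
    by apply/negbTE; rewrite -ltNge yhigh.
  by apply/eq_in_map => j; rewrite mem_filter => /andP[/andP[ji xj] _]; rewrite ylow.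
have xlow : perm_eq [seq x j | j <- enum 'I_n & x j <= c] (c :: Ly).
  have iP : i \in [seq j <- enum 'I_n | x j <= c] by rewrite mem_filter lexx mem_enum.
  rewrite Ly_low; apply: perm_trans (perm_map x (perm_to_rem iP)) _.
  rewrite rem_filter; last exact: filter_uniq (enum_uniq _).
  by rewrite (filter_predI (predC1 i) (fun j => x j <= c)).
have sx : sorted_vec x =
    sort <=%R Ly ++ c :: sort <=%R [seq x j | j <- enum 'I_n & c < x j].
  have xlow' := perm_trans xlow (permEl (perm_catC [:: c] Ly)).
  rewrite (sorted_vec_split x c) (perm_sort_leP _ _ xlow') sort_cat_le -?catA //.
  by move=> a b /mapP[j]; rewrite mem_filter inE => /andP[yj _] -> /eqP->.
have sy : sorted_vec y = sort <=%R Ly ++ sort <=%R Ygt := sorted_vec_split y c.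
exists (size (sort <=%R Ly)); split.
  by rewrite -(size_sorted_vec x) sx size_cat /= addnS ltnS leq_addr.
split; first by move=> m hm; rewrite sx sy !nth_cat hm.
rewrite sx sy !nth_cat ltnn subnn /=.
have : y i \in sort <=%R Ygt by rewrite mem_sort map_f // mem_filter yi mem_enum.
case: (sort _ Ygt) (mem_sort <=%R Ygt) => //= a G memG _.
by have := memG a; rewrite inE eqxx => /esym /mapP[j]; rewrite mem_filter => /andP[+ _] ->.
Qed.

Lemma leximin_dom_sum_lt x y :
  (forall m, (0 < m < n)%N -> nth 0 (sorted_vec x) m = nth 0 (sorted_vec x) 1) ->
  nth 0 (sorted_vec y) 0 <= nth 0 (sorted_vec x) 0 ->
  leximin_dom y x -> \sum_j x j < \sum_j y j.
Proof.
move=> xconst yhead [t [tn [teq tlt]]].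
have t0 : (0 < t)%N by case: t tlt {teq tn} => // /lt_le_trans/(_ yhead); rewrite ltxx.
rewrite -(sum_sorted_vec x) -(sum_sorted_vec y).
rewrite (bigD1 (Ordinal tn)) //= [ltRHS](bigD1 (Ordinal tn)) //=.
apply: ltr_leD => //; apply: ler_sum => m /= mt.
have [mlt|mgt] := ltnP m t; first by rewrite teq.
have {}mgt : (t < m)%N by rewrite ltn_neqAle mgt andbT eq_sym.
have -> : nth 0 (sorted_vec x) m = nth 0 (sorted_vec x) t.
  by rewrite (xconst m) ?(xconst t); rewrite ?t0 ?tn ?(ltn_trans t0 mgt) ?ltn_ord.
by apply/(le_trans (ltW tlt))/sorted_vec_nth_le; rewrite (ltnW mgt) ltn_ord.
Qed.

Definition redistribute (p : 'I_n -> R) i (d : R) (j : 'I_n) : R :=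
  if j == i then p i + d else if p i < p j then p j - d else p j.

Lemma redistribute_leximin_dom p i d : 0 < d ->
  (forall j, p i < p j -> d < p j - p i) -> leximin_dom (redistribute p i d) p.
Proof.
move=> d0 dgap; apply: (@leximin_dom_raise p _ i) => [|j /negbTE ji|j /negbTE ji pij].
- by rewrite /redistribute eqxx ltrDl.
- by rewrite /redistribute ji ltNge => ->.
- by rewrite /redistribute ji pij ltrBrDl -ltrBrDr dgap.
Qed.

End SortedVec.

Lemma exists_pos_lt (R : realFieldType) (T : finType) (P : pred T) (f : T -> R) :
  (forall t, P t -> 0 < f t) -> exists2 d : R, 0 < d & forall t, P t -> d < f t.
Proof.
move=> fP; set m := \big[Num.min/1]_(t | P t) f t.
have m0 : 0 < m by apply: (big_ind (fun y => 0 < y)) => // a b a0 b0; rewrite lt_min a0.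
exists (m / 2) => [|t Pt]; first exact: divr_gt0.
have : m <= f t by rewrite /m (bigD1 t) //= ge_min lexx.
lra.
Qed.

Section Auction.
Variables (R : realFieldType) (n : nat) (M : finType) (v : 'I_n -> {set M} -> R).
Implicit Types (S A B : {set 'I_n}) (p : 'I_n -> R) (a : {ffun 'I_n -> {set M}}).

Lemma ler_sum_subset A B (f : 'I_n -> R) : A \subset B ->
  (forall j, 0 <= f j) -> \sum_(j in A) f j <= \sum_(j in B) f j.
Proof.
move=> /subsetP AB f0; rewrite [leLHS]big_mkcond [leRHS]big_mkcond.
by apply: ler_sum => j _; case: ifP => [/AB ->|_] //; case: ifP.
Qed.

Lemma sum_if_eq A i (d : R) :
  \sum_(j in A) (if j == i then d else 0) = if i \in A then d else 0.
Proof.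
case: ifP => iA; first by rewrite (bigD1 i) //= eqxx big1 ?addr0 // => j /andP[_ /negbTE->].
by rewrite big1 // => j jA; case: eqP jA => // ->; rewrite iA.
Qed.

Lemma wS_ge_alloc S a : feasible a -> \sum_(i in S) v i (a i) <= wS v S.
Proof. by move=> fa; rewrite /wS (bigD1 a) //= le_max lexx. Qed.

Lemma wS_le S (x : R) : 0 <= x ->
  (forall a, feasible a -> \sum_(i in S) v i (a i) <= x) -> wS v S <= x.
Proof.
by move=> x0 le_x; apply: (big_ind (fun y => y <= x)) => // b c; rewrite ge_max => ->.
Qed.

Lemma feasible_set0 : feasible [ffun _ : 'I_n => set0 : {set M}].
Proof.
by apply/forallP => i; apply/forallP => j; rewrite !ffunE -setI_eq0 set0I eqxx implybT.
Qed.

Hypothesis vok : valuation_ok v.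

Lemma wS_ge0 S : 0 <= wS v S.
Proof.
apply: le_trans _ (wS_ge_alloc S feasible_set0).
by rewrite big1 // => j _; rewrite ffunE vok.1.
Qed.

Lemma le_wS A B : A \subset B -> wS v A <= wS v B.
Proof.
move=> AB; apply: wS_le => [|a fa]; first exact: wS_ge0.
apply: le_trans _ (wS_ge_alloc B fa); apply: ler_sum_subset => // j; exact: vok.2.
Qed.

Definition slack p S := wS v [set: 'I_n] - wS v S - \sum_(j in ~: S) p j.

Lemma core_slack_ge0 p S : in_core v p -> 0 <= slack p S.
Proof. by move=> [_ pc]; rewrite subr_ge0 pc. Qed.

Lemma core_le_marginal p i : in_core v p ->
  p i <= wS v [set: 'I_n] - wS v (~: [set i]).
Proof. by move=> [_ /(_ (~: [set i]))]; rewrite setCK big_set1. Qed.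

Lemma is_core_max_marginal i :
  is_core_max v i (wS v [set: 'I_n] - wS v (~: [set i])).
Proof.
split; last by move=> p; apply: core_le_marginal.
set d := _ - _; have d0 : 0 <= d by rewrite subr_ge0 le_wS ?subsetT.
exists (fun j => if j == i then d else 0); split; last by rewrite eqxx.
split=> [j|S]; first by case: ifP.
rewrite sum_if_eq; case: ifP => iS; last by rewrite subr_ge0 le_wS ?subsetT.
by rewrite lerD2l lerN2 le_wS // -setCS setCK sub1set.
Qed.

Lemma core_loser_zero a p j : optimal_alloc v a -> a j = set0 ->
  in_core v p -> p j = 0.
Proof.
move=> [fa wa] aj pcore; apply/le_anti; rewrite pcore.1 andbT.
apply: le_trans (core_le_marginal j pcore) _; rewrite subr_le0 -wa.
apply: le_trans (wS_ge_alloc (~: [set j]) fa); rewrite (bigD1 j) //= aj vok.1 add0r.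
by rewrite le_eqVlt (eq_bigl (fun k => k \in ~: [set j])) ?eqxx // => k; rewrite !inE.
Qed.

Lemma core_sum_le_card_winners a p A (c : R) :
  optimal_alloc v a -> in_core v p -> 0 <= c -> {in A, forall j, p j <= c} ->
  \sum_(j in A) p j <= #|winners a|%:R * c.
Proof.
move=> opt pcore c0 pA; rewrite mulr_natl -sumr_const.
rewrite [leLHS]big_mkcond [leRHS]big_mkcond; apply: ler_sum => j _.
have [jW|jL] := boolP (j \in winners a); case: ifP => // /pA //.
by rewrite (core_loser_zero opt _ pcore) //; move: jL; rewrite inE negbK => /eqP.
Qed.

Lemma redistribute_in_core p i d : in_core v p -> 0 < d ->
  (forall j, p i < p j -> d < p j - p i) ->
  (forall S, i \in ~: S -> 0 < slack p S -> d <= slack p S) ->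
  (forall S, i \in ~: S -> slack p S = 0 -> exists2 j, j \in ~: S & p i < p j) ->
  in_core v (redistribute p i d).
Proof.
move=> pcore d0 dgap dslack tight; have [p0 _] := pcore.
have red_le j : redistribute p i d j <= p j + (if j == i then d else 0).
  rewrite /redistribute; case: eqP => [->|_]; first by rewrite lexx.
  by rewrite addr0; case: ifP => // _; rewrite gerBl ltW.
split=> [j|S].
  rewrite /redistribute; case: eqP => _; first by rewrite addr_ge0 ?p0 ?ltW.
  by case: ifP => // /dgap dj; rewrite subr_ge0 ltW // (lt_le_trans dj) // gerBl.
have -> : wS v [set: 'I_n] - wS v S = \sum_(j in ~: S) p j + slack p S.
  by rewrite /slack [in RHS]addrC subrK.
have sum_le : \sum_(j in ~: S) redistribute p i d j <=
              \sum_(j in ~: S) p j + (if i \in ~: S then d else 0).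
  by rewrite -sum_if_eq -big_split; apply: ler_sum => j _; apply: red_le.
have := core_slack_ge0 S pcore; rewrite le_eqVlt => /orP[/eqP/esym s0 | s_pos].
  have [iS|iS] := boolP (i \in ~: S); last first.
    by apply: le_trans sum_le _; rewrite (negbTE iS) s0.
  have [j0 j0S pj0] := tight S iS s0.
  have j0i : j0 != i by apply: contraTneq pj0 => ->; rewrite ltxx.
  apply: le_trans (_ : \sum_(j in ~: S) (p j + (if j == i then d else 0)
                                    - (if j == j0 then d else 0)) <= _).
    apply: ler_sum => j _; rewrite /redistribute.
    case: (eqVneq j i) => [->|ji]; first by rewrite eq_sym (negbTE j0i) subr0.
    case: (eqVneq j j0) => [->|_]; first by rewrite pj0 addr0.
    by rewrite addr0 subr0; case: ifP => // _; rewrite gerBl ltW.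
  by rewrite sumrB big_split /= !sum_if_eq iS j0S s0 addrK addr0.
apply: le_trans sum_le _; rewrite lerD2l; case: ifP => iS; last exact: ltW.
exact: dslack.
Qed.

Lemma BLO_tight_coalition p i : is_BLO v p ->
  exists S, [/\ i \in ~: S, slack p S = 0 & {in ~: S, forall j, p j <= p i}].
Proof.
move=> [pcore nodom].
have [/existsP[S /and3P[iS /eqP s0 /forall_inP poor]]|no_tight] := boolP
  [exists S, [&& i \in ~: S, slack p S == 0 & [forall j in ~: S, p j <= p i]]].
  by exists S.
exfalso; apply: nodom.
have [d1 d1_0 d1_slack] : exists2 d1 : R, 0 < d1 &
    forall S, (i \in ~: S) && (0 < slack p S) -> d1 < slack p S.
  by apply: exists_pos_lt => S /andP[].
have [d2 d2_0 d2_gap] : exists2 d2 : R, 0 < d2 &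
    forall j, p i < p j -> d2 < p j - p i.
  by apply: exists_pos_lt => j; rewrite subr_gt0.
set d := Num.min d1 d2.
have d_gap j : p i < p j -> d < p j - p i.
  by move=> /d2_gap; apply: le_lt_trans; rewrite ge_min lexx orbT.
have d_0 : 0 < d by rewrite lt_min d1_0.
exists (redistribute p i d); split; last exact: redistribute_leximin_dom d_0 d_gap.
apply: redistribute_in_core => // [S iS s_pos|S iS s0].
  by apply/ltW/(le_lt_trans _ (d1_slack S _)); rewrite ?ge_min ?lexx ?iS.
move: no_tight; rewrite negb_exists => /forallP/(_ S); rewrite iS s0 eqxx /=.
by move=> /forall_inPn[j jS]; rewrite -ltNge; exists j.
Qed.

Lemma BLO_ge_core_max_div_winners a p i pistar :
  optimal_alloc v a -> winners a != set0 -> is_BLO v p ->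
  is_core_max v i pistar -> pistar / #|winners a|%:R <= p i.
Proof.
move=> opt W0 blo [[q [qcore <-]] _].
have [S [iS s0 poor]] := BLO_tight_coalition i blo.
rewrite ler_pdivrMr ?ltr0n ?card_gt0 // mulrC.
apply: le_trans (core_le_marginal i qcore) _.
apply: le_trans _ (core_sum_le_card_winners opt blo.1 (blo.1.1 i) poor).
move/eqP: s0; rewrite subr_eq0 => /eqP <-.
by rewrite lerD2l lerN2 le_wS // -setCS setCK sub1set.
Qed.

End Auction.

Section TightExample.
Variables (R : realFieldType) (k : nat).
Implicit Types (A : {set 'I_k.+2}) (a : {ffun 'I_k.+2 -> {set 'I_k.+1}}).

(* Bidder [0] values the whole package of the [k.+1] items at [k]; bidder
   [j.+1] values any bundle containing item [j] at [1]. *)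
Definition tight_val (j : 'I_k.+2) (B : {set 'I_k.+1}) : R :=
  if j == ord0 then (if B == setT then k%:R else 0) else (inord j.-1 \in B)%:R.

Definition tight_alloc : {ffun 'I_k.+2 -> {set 'I_k.+1}} :=
  [ffun j => if j == ord0 then set0 else [set inord j.-1]].

Definition package_alloc : {ffun 'I_k.+2 -> {set 'I_k.+1}} :=
  [ffun j => if j == ord0 then setT else set0].

Definition tight_price (j : 'I_k.+2) : R := (j != ord0)%:R / k.+1%:R.

Lemma set0_neqT : (set0 : {set 'I_k.+1}) != setT.
Proof. by apply/eqP => /setP/(_ ord0); rewrite !inE. Qed.

Lemma tight_val_ok : valuation_ok tight_val.
Proof.
split=> [j|j B]; rewrite /tight_val; first by rewrite (negbTE set0_neqT) inE; case: ifP.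
by case: ifP => _; [case: ifP => _|]; rewrite ?lexx ?ler0n.
Qed.

Lemma feasible_tight_alloc : feasible tight_alloc.
Proof.
apply/forallP => i; apply/forallP => j; apply/implyP => ij; rewrite !ffunE.
have [_|i0] := eqVneq i ord0; first by rewrite disjoint_sym -setI_eq0 setI0.
have [_|j0] := eqVneq j ord0; first by rewrite -setI_eq0 setI0.
rewrite disjoints1 inE; apply: contra ij => /eqP/(congr1 (@nat_of_ord _)).
rewrite !inordK; [|by have := ltn_ord j; lia|by have := ltn_ord i; lia].
by move: i0 j0; rewrite -!val_eqE /= => i0 j0 eij; lia.
Qed.

Lemma feasible_package_alloc : feasible package_alloc.
Proof.
apply/forallP => i; apply/forallP => j; apply/implyP => ij; rewrite !ffunE.
have [ei|_] := eqVneq i ord0; last by rewrite -setI_eq0 set0I.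
have [ej|_] := eqVneq j ord0; last by rewrite -setI_eq0 setI0.
by move: ij; rewrite ei ej eqxx.
Qed.

Lemma tight_welfare_le a A : feasible a ->
  \sum_(j in A) tight_val j (a j) <= Num.max k%:R #|A :\ ord0|%:R.
Proof.
move=> fa; have [aT|aT] := eqVneq (a ord0) setT.
  rewrite le_max; apply/orP; left.
  apply: le_trans (_ : _ <= \sum_(j in A) (if j == ord0 then k%:R else 0)) _.
    apply: ler_sum => j _; rewrite /tight_val; case: eqP => [->|/eqP j0].
      by rewrite aT eqxx.
    have /forallP/(_ ord0)/forallP/(_ j)/implyP := fa.
    by rewrite eq_sym j0 aT -setI_eq0 setTI => /(_ isT)/eqP ->; rewrite inE.
  by rewrite sum_if_eq; case: ifP; rewrite ?ler0n.
rewrite le_max -sumr_const; apply/orP; right.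
rewrite [leLHS]big_mkcond [leRHS]big_mkcond; apply: ler_sum => j _.
rewrite !inE /tight_val; case: eqP => [->|_] /=; first by rewrite (negbTE aT); case: ifP.
by case: ifP => // _; rewrite lern1 leq_b1.
Qed.

Lemma card_setT_D1 : #|[set: 'I_k.+2] :\ ord0| = k.+1.
Proof. by rewrite setTD cardsC1 card_ord. Qed.

Lemma wS_tight_le A j : j != ord0 -> j \notin A -> wS tight_val A <= k%:R.
Proof.
move=> j0 jA; apply: wS_le => [|a fa]; first exact: ler0n.
apply: le_trans (tight_welfare_le A fa) _; rewrite ge_max lexx ler_nat -ltnS.
have /proper_card : A :\ ord0 \proper [set: 'I_k.+2] :\ ord0.
  apply/properP; split; first by apply: setSD; apply: subsetT.
  by exists j; rewrite !inE ?j0 // (negbTE jA) andbF.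
by rewrite card_setT_D1.
Qed.

Lemma wS_tight_ge A : ord0 \in A -> k%:R <= wS tight_val A.
Proof.
move=> A0; apply: le_trans _ (wS_ge_alloc _ A feasible_package_alloc).
rewrite (bigD1 ord0) //= ffunE /tight_val !eqxx lerDl.
by apply: sumr_ge0 => j _; apply: tight_val_ok.2.
Qed.

Lemma sum_tight_alloc : \sum_(j < k.+2) tight_val j (tight_alloc j) = k.+1%:R.
Proof.
rewrite big_ord_recl ffunE /tight_val eqxx (negbTE set0_neqT) add0r.
rewrite (eq_bigr (fun=> 1)) ?sumr_const ?card_ord // => j _.
by rewrite ffunE eq_sym (negbTE (neq_lift _ _)) set11.
Qed.

Lemma wS_tight_setT : wS tight_val [set: 'I_k.+2] = k.+1%:R.
Proof.
apply/le_anti/andP; split.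
  apply: wS_le => [|a fa]; first exact: ler0n.
  apply: le_trans (tight_welfare_le _ fa) _.
  by rewrite card_setT_D1 ge_max lexx ler_nat leqnSn.
rewrite -sum_tight_alloc; apply: le_trans _ (wS_ge_alloc _ _ feasible_tight_alloc).
by rewrite [leRHS](eq_bigl xpredT) => // j; rewrite inE.
Qed.

Lemma optimal_tight_alloc : optimal_alloc tight_val tight_alloc.
Proof. by split; [exact: feasible_tight_alloc | rewrite wS_tight_setT sum_tight_alloc]. Qed.

Lemma card_winners_tight_alloc : #|winners tight_alloc| = k.+1.
Proof.
have -> : winners tight_alloc = [set: 'I_k.+2] :\ ord0; last exact: card_setT_D1.
apply/setP => j; rewrite !inE ffunE andbT.
case: j => -[|j] hj /=; first by rewrite eqxx.
by apply/set0Pn; exists (inord j); rewrite inE.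
Qed.

Lemma is_core_max_tight : is_core_max tight_val (lift ord0 ord0) 1.
Proof.
have := is_core_max_marginal tight_val_ok (lift ord0 ord0); rewrite wS_tight_setT.
have -> : wS tight_val (~: [set lift ord0 ord0]) = k%:R.
  apply/le_anti/andP; split; last by rewrite wS_tight_ge // !inE neq_lift.
  apply: (wS_tight_le (j := lift ord0 ord0)); first by rewrite eq_sym neq_lift.
  by rewrite !inE eqxx.
by rewrite -natr1 addrAC subrr add0r.
Qed.

Lemma sum_tight_price : \sum_j tight_price j = 1.
Proof.
rewrite -mulr_suml big_ord_recl eqxx add0r (eq_bigr (fun=> 1)) => [|j _].
  by rewrite sumr_const card_ord mulfV ?pnatr_eq0.
by rewrite eq_sym neq_lift.
Qed.

Lemma tight_price_in_core : in_core tight_val tight_price.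
Proof.
have price_ge0 j : 0 <= tight_price j by rewrite divr_ge0 ?ler0n.
split=> // S.
have [/existsP[j /andP[jS j0]]|no_bidder] := boolP [exists j, (j \in ~: S) && (j != ord0)].
  apply: le_trans (_ : _ <= 1) _.
    rewrite -sum_tight_price [leRHS](bigID (mem (~: S))) /= lerDl.
    exact: sumr_ge0.
  rewrite wS_tight_setT -natr1 addrAC lerDr subr_ge0.
  by rewrite inE in jS; apply: wS_tight_le j0 jS.
rewrite big1 ?subr_ge0 ?le_wS ?subsetT //; first exact: tight_val_ok.
move=> j jS; move: no_bidder; rewrite negb_exists => /forallP/(_ j).
by rewrite jS negbK /tight_price => /eqP ->; rewrite eqxx mul0r.
Qed.

Lemma sorted_vec_tight_price :
  sorted_vec tight_price = 0 :: nseq k.+1 k.+1%:R^-1.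
Proof.
set c : R := k.+1%:R^-1.
have map_cst (s : seq 'I_k.+1) : [seq c | _ <- s] = nseq (size s) c.
  by elim: s => //= _ s ->.
have sorted_cst m : sorted <=%R (nseq m c) by elim: m => // -[|m] //= ->; rewrite lexx.
rewrite /sorted_vec enum_ordSl /= {1}/tight_price eqxx mul0r -map_comp.
rewrite (eq_map (g := fun=> c)) => [|j /=]; last first.
  by rewrite /tight_price eq_sym neq_lift mul1r.
rewrite map_cst size_enum_ord sort_le_id //= invr_ge0 ler0n.
exact: sorted_cst k.+1.
Qed.

Lemma tight_price_BLO : is_BLO tight_val tight_price.
Proof.
split=> [|[q [qcore dom]]]; first exact: tight_price_in_core.
have q0 : q ord0 = 0.
  by apply: (core_loser_zero tight_val_ok optimal_tight_alloc _ qcore); rewrite ffunE eqxx.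
have qsum : \sum_j q j <= 1.
  rewrite (bigD1 ord0) //= q0 add0r (eq_bigl (mem (~: [set ord0]))) => [|j]; last first.
    by rewrite !inE.
  apply: le_trans (qcore.2 [set ord0]) _.
  by rewrite wS_tight_setT -natr1 lerBlDr [leRHS]addrC lerD2r wS_tight_ge ?inE.
suff : \sum_j tight_price j < \sum_j q j by rewrite sum_tight_price ltNge qsum.
apply: leximin_dom_sum_lt dom => [[|m] //|].
  by rewrite sorted_vec_tight_price /=; case: m => [|m] //=; rewrite nth_nseq !ltnS => ->.
by apply: le_trans (sorted_vec_head_le q ord0) _; rewrite q0 sorted_vec_tight_price.
Qed.

End TightExample.

Theorem theorem2 (R : realType) :
  (forall (n : nat) (M : finType) (v : 'I_n -> {set M} -> R)
          (astar : {ffun 'I_n -> {set M}}),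
     valuation_ok v -> optimal_alloc v astar ->
     winners astar != set0 ->
     forall (pBLO : 'I_n -> R), is_BLO v pBLO ->
     forall (i : 'I_n) (pistar : R), is_core_max v i pistar ->
       pistar / (#|winners astar|)%:R <= pBLO i)
  /\
  (forall k : nat, (1 <= k)%N ->
     exists (n m : nat) (v : 'I_n -> {set 'I_m} -> R)
            (astar : {ffun 'I_n -> {set 'I_m}}),
       valuation_ok v /\ optimal_alloc v astar /\
       #|winners astar| = k /\
       exists (i : 'I_n) (pistar : R) (pBLO : 'I_n -> R),
         is_core_max v i pistar /\ 0 < pistar /\
         is_BLO v pBLO /\ pBLO i = pistar / k%:R).
Proof.
split=> [n M v a vok opt W0 p blo i pistar|[//|k] _].
  exact: BLO_ge_core_max_div_winners.
exists k.+2, k.+1, (@tight_val R k), (tight_alloc k).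
split; first exact: tight_val_ok.
split; first exact: optimal_tight_alloc.
split; first exact: card_winners_tight_alloc.
exists (lift ord0 ord0), 1, (@tight_price R k).
split; first exact: is_core_max_tight.
split; first exact: ltr01.
split; first exact: tight_price_BLO.
by rewrite /tight_price eq_sym neq_lift.
Qed.
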